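(* Let $k\ge 2$, $n\ge1$, and let $L_n$ and $\varphi:L_n\to E^{n-1}$ be as in the context. Then $\varphi$ is surjective.
   Context: $E=\{0,\dots,k-1\}$. For $\mathbf a\in E^n$, $w(\mathbf a)=a_1+\dots+a_n$, and $\mathcal B_t=\{\mathbf a\in E^n: w(\mathbf a)=t\}$. Let $g=\lfloor n(k-1)/2\rfloor$ and $C_i=\{\mathbf a\in E^n: a_1=i\}$. Define $L_n=(\mathcal B_0\cup\dots\cup\mathcal B_g)\cap(C_0\cup C_{k-1})$ if $n(k-1)$ is odd, and $L_n=((\mathcal B_0\cup\dots\cup\mathcal B_{g-1})\cap(C_0\cup C_{k-1}))\cup(\mathcal B_g\cap C_0)$ if $n(k-1)$ is even. For $a\in E$ let $\overline a=k-1-a$. Define $\varphi(a_1,\dots,a_n)=(a_2,\dots,a_n)$ if $a_1=0$ and $\varphi(a_1,\dots,a_n)=(\overline{a}_2,\dots,\overline{a}_n)$ if $a_1=k-1$. *)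

From mathcomp Require Import all_boot.
Set Implicit Arguments. Unset Strict Implicit. Unset Printing Implicit Defensive.

(* E = {0,...,k-1} is the ordinal type 'I_k; E^n is n.-tuple 'I_k.
   Vectors of length n = m.+1 (n >= 1), so that a_1 = thead a exists. *)

Definition weight (k : nat) (s : seq 'I_k) : nat := \sum_(x <- s) (x : nat).

Definition gval (n k : nat) : nat := (n * (k - 1))./2.

Definition inL (k m : nat) (a : m.+1.-tuple 'I_k) : bool :=
  let n := m.+1 in
  let t := weight a in
  let a1 := (thead a : nat) in
  let g := gval n k in
  if odd (n * (k - 1)) then
    (t <= g) && ((a1 == 0) || (a1 == k - 1))
  else
    ((t < g) && ((a1 == 0) || (a1 == k - 1))) || ((t == g) && (a1 == 0)).

Definition bar (k : nat) (x : 'I_k) : 'I_k := rev_ord x.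

(* phi(a) = (a_2..a_n) if a_1 = 0, (bar a_2 .. bar a_n) if a_1 = k-1
   (the value for other a_1 is irrelevant: phi is only used on L_n) *)
Definition phi (k m : nat) (a : m.+1.-tuple 'I_k) : m.-tuple 'I_k :=
  if (thead a : nat) == 0 then behead_tuple a
  else map_tuple (@bar k) (behead_tuple a).

From mathcomp Require Import all_boot.
From mathcomp Require Import zify.

(* Prepending 0 to b, or k-1 to the complement of b, are the two preimages of
   b under phi.  Complementation turns weight t into (n-1)(k-1) - t, so the
   second preimage has weight n(k-1) - t: when t exceeds g = floor(n(k-1)/2),
   this is at most g, with equality excluded when n(k-1) is even. *)

Lemma weight_cons (k : nat) (x : 'I_k) (s : seq 'I_k) :
  weight (x :: s) = x + weight s.
Proof. by rewrite /weight big_cons. Qed.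

Lemma weight_map_bar (k : nat) (s : seq 'I_k) :
  weight (map (@bar k) s) + weight s = size s * (k - 1).
Proof.
elim: s => [|x s IH]; first by rewrite /weight !big_nil.
rewrite /= !weight_cons [bar x : nat]/=; have := ltn_ord x; lia.
Qed.

Lemma phi_cons0 (k m : nat) (b : m.-tuple 'I_k.+1) :
  phi (cons_tuple ord0 b) = b.
Proof. exact: val_inj. Qed.

Lemma phi_cons_max_bar (k m : nat) (b : m.-tuple 'I_k.+2) :
  phi (cons_tuple ord_max (map_tuple (@bar _) b)) = b.
Proof.
apply: val_inj; rewrite /phi /= -map_comp map_id_in // => x _.
exact: rev_ordK.
Qed.

Lemma inL_cons0 (k m : nat) (b : m.-tuple 'I_k.+1) :
  weight b <= gval m.+1 k.+1 -> inL (cons_tuple ord0 b).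
Proof.
rewrite /inL /= weight_cons add0n !andbT => le_wg.
by case: odd => //; rewrite orbC -leq_eqVlt.
Qed.

Lemma inL_cons_max_bar (k m : nat) (b : m.-tuple 'I_k.+1) :
  gval m.+1 k.+1 < weight b -> inL (cons_tuple ord_max (map_tuple (@bar _) b)).
Proof.
have := @weight_map_bar _ b; have := odd_double_half (m.+1 * (k.+1 - 1)).
rewrite /inL /gval /= weight_cons size_tuple subn1 /= eqxx orbT !andbT.
by case: odd => /=; lia.
Qed.

Theorem lemma3 (k m : nat) (hk : 2 <= k) :
  forall b : m.-tuple 'I_k, exists a : m.+1.-tuple 'I_k, inL a /\ phi a = b.
Proof.
case: k hk => [|[|k]] // _ b.
case: (leqP (weight b) (gval m.+1 k.+2)) => bound.
- by exists (cons_tuple ord0 b); split; [exact: inL_cons0 bound | exact: phi_cons0].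
- exists (cons_tuple ord_max (map_tuple (@bar _) b)).
  by split; [exact: inL_cons_max_bar bound | exact: phi_cons_max_bar].
Qed.
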